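(* Let $m\ge0$, let $f:\mathbb{R}^n\to\mathbb{R}$ be $m$-weakly convex with $f^\star:=\inf_x f(x)>-\infty$, and let $\beta\in(0,1)$, $\rho>0$, $\alpha=m+\rho$, $x_1\in\mathbb{R}^n$. Suppose the sequence $(x_k)_{k\ge1}$ is generated as follows: for each $k\ge1$ there is a convex function $\tilde f_k:\mathbb{R}^n\to\mathbb{R}$ with $\tilde f_k(x)\le f(x)+\frac m2\|x-x_k\|^2$ for all $x$, such that $x_{k+1}=\arg\min_x\{\tilde f_k(x)+\frac\rho2\|x-x_k\|^2\}$ and $$f(x_k)-\Big(f(x_{k+1})+\frac m2\|x_{k+1}-x_k\|^2\Big)\ge\beta\big(f(x_k)-\tilde f_k(x_{k+1})\big).$$ Let $\eta>0$, $\epsilon>0$. If $T$ is an integer with $$T\ge \frac{2\alpha^2(f(x_1)-f^\star)}{m+\beta\rho}\cdot\frac1{\eta^2}+\frac{(1-\beta)(f(x_1)-f^\star)}{\beta}\cdot\frac1\epsilon+1,$$ then at least one of $x_2,\dots,x_{T+1}$ is an $(\eta,\epsilon)$-inexact stationary point of $f$.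
   Context: A function $f$ is $m$-weakly convex ($m\ge 0$) if $x\mapsto f(x)+\frac{m}{2}\|x\|^2$ is convex. For $\epsilon\ge 0$, the $\epsilon$-inexact subdifferential at $x$ is $\partial_\epsilon f(x)=\{v\in\mathbb{R}^n: f(y)\ge f(x)+\langle v,y-x\rangle-\frac{m}{2}\|y-x\|^2-\epsilon\ \ \forall y\in\mathbb{R}^n\}$. A point $x$ is an $(\eta,\epsilon)$-inexact stationary point if $\mathrm{dist}(0,\partial_\epsilon f(x))\le\eta$. *)

From HB Require Import structures.
From mathcomp Require Import all_boot all_order all_algebra.
From mathcomp Require Import all_classical all_reals ereal.
Set Implicit Arguments. Unset Strict Implicit. Unset Printing Implicit Defensive.
Import Order.TTheory GRing.Theory Num.Theory.
Local Open Scope ring_scope.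
Local Open Scope classical_set_scope.

Section Defs.
Variables (R : realType) (n : nat).
Notation vec := 'rV[R]_n.

Definition dotv (x y : vec) : R := \sum_(i < n) x ord0 i * y ord0 i.
Definition enorm (x : vec) : R := Num.sqrt (dotv x x).

Definition convexf (g : vec -> R) : Prop :=
  forall (x y : vec) (t : R), 0 <= t -> t <= 1 ->
    g ((1 - t) *: x + t *: y) <= (1 - t) * g x + t * g y.

Definition weakly_convex (m : R) (f : vec -> R) : Prop :=
  convexf (fun x => f x + m / 2 * enorm x ^+ 2).

Definition inexact_subdiff (m : R) (f : vec -> R) (eps : R) (x : vec) : set vec :=
  [set v | forall y : vec,
     f y >= f x + dotv v (y - x) - m / 2 * enorm (y - x) ^+ 2 - eps].

(* dist(0, S) as an extended real (+oo for empty S) *)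
Definition dist0 (S : set vec) : \bar R :=
  ereal_inf [set (enorm v)%:E | v in S].

Definition inexact_stationary (m : R) (f : vec -> R) (eta eps : R) (x : vec) : Prop :=
  (dist0 (inexact_subdiff m f eps x) <= eta%:E)%E.

End Defs.

From HB Require Import structures.
From mathcomp Require Import all_boot all_order all_algebra.
From mathcomp Require Import all_classical all_reals ereal.
From mathcomp Require Import ring lra.
Set Implicit Arguments. Unset Strict Implicit. Unset Printing Implicit Defensive.
Import Order.TTheory GRing.Theory Num.Theory.
Local Open Scope ring_scope.

(* Write [Δ_k = f x_k - f x_(k+1)] and [d_k = |x_(k+1) - x_k|].  The optimality of
   the proximal step for the convex model [g = ftil k] gives the subgradient
   inequality [g y >= g x_(k+1) + rho <x_k - x_(k+1), y - x_(k+1)>]; combined with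
   [g <= f + m/2 |. - x_k|^2] it shows that [(m + rho)(x_k - x_(k+1))] is an
   [e]-inexact subgradient of [f] at [x_(k+1)] with [e = (1 - beta)(f x_k - g x_(k+1))].
   If [x_(k+1)] is not [(eta, eps)]-stationary, either [(m + rho) d_k > eta] or
   [e > eps], and the descent condition turns either alternative into a lower
   bound on [Δ_k]; these bounds sum to [T] over [T] steps, while the [Δ_k]
   telescope to at most [f x_1 - fstar]. *)

Section InnerProduct.
Variables (R : realType) (n : nat).
Implicit Types (u v w : 'rV[R]_n).

Lemma dotvC u v : dotv u v = dotv v u.
Proof. by apply: eq_bigr => i _; rewrite mulrC. Qed.

Lemma dotvDl u v w : dotv (u + v) w = dotv u w + dotv v w.
Proof. by rewrite /dotv -big_split; apply: eq_bigr => i _; rewrite !mxE mulrDl. Qed.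

Lemma dotvZl (a : R) u w : dotv (a *: u) w = a * dotv u w.
Proof. by rewrite /dotv mulr_sumr; apply: eq_bigr => i _; rewrite !mxE mulrA. Qed.

Lemma dotvNl u w : dotv (- u) w = - dotv u w.
Proof. by rewrite -scaleN1r dotvZl mulN1r. Qed.

Lemma dotvBl u v w : dotv (u - v) w = dotv u w - dotv v w.
Proof. by rewrite dotvDl dotvNl. Qed.

Lemma dotvv_ge0 u : 0 <= dotv u u.
Proof. by apply: sumr_ge0 => i _; rewrite -expr2 sqr_ge0. Qed.

Lemma sqr_enorm u : enorm u ^+ 2 = dotv u u.
Proof. by rewrite /enorm sqr_sqrtr // dotvv_ge0. Qed.

Lemma enorm_ge0 u : 0 <= enorm u.
Proof. exact: sqrtr_ge0. Qed.

Lemma enorm0 : enorm (0 : 'rV[R]_n) = 0.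
Proof. by rewrite /enorm /dotv big1 ?sqrtr0 // => i _; rewrite mxE mul0r. Qed.

Lemma sqr_enormD u v :
  enorm (u + v) ^+ 2 = enorm u ^+ 2 + 2 * dotv u v + enorm v ^+ 2.
Proof.
by rewrite !sqr_enorm !dotvDl (dotvC u (u + v)) (dotvC v (u + v)) !dotvDl (dotvC v u); ring.
Qed.

Lemma sqr_enormB u v :
  enorm (u - v) ^+ 2 = enorm u ^+ 2 - 2 * dotv u v + enorm v ^+ 2.
Proof.
by rewrite !sqr_enorm !dotvBl (dotvC u (u - v)) (dotvC v (u - v)) !dotvBl (dotvC v u); ring.
Qed.

Lemma sqr_enormZ (a : R) u : enorm (a *: u) ^+ 2 = a ^+ 2 * enorm u ^+ 2.
Proof. by rewrite !sqr_enorm dotvZl (dotvC u (a *: u)) dotvZl; ring. Qed.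

Lemma enormZ (a : R) u : 0 <= a -> enorm (a *: u) = a * enorm u.
Proof.
move=> a0; apply: (pexpIrn (n := 2)) => //; rewrite ?nnegrE ?enorm_ge0 //.
  by rewrite mulr_ge0 ?enorm_ge0.
by rewrite sqr_enormZ exprMn.
Qed.

Lemma enorm_sub u v : enorm (u - v) = enorm (v - u).
Proof. by rewrite /enorm -(opprB v u) dotvNl dotvC dotvNl opprK. Qed.

End InnerProduct.

Lemma le0_of_le_mul_small (R : realFieldType) (D s : R) :
  (forall t, 0 < t -> t <= 1 -> D <= t * s) -> D <= 0.
Proof.
move=> Hle; rewrite leNgt; apply/negP => D0.
have [s0|s0] := leP s 0; first by have := Hle 1 ltr01 (lexx _); lra.
have Ds0 : 0 < D + s by lra.
have t1 : D / (D + s) <= 1 by rewrite ler_pdivrMr // mul1r; lra.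
have := Hle _ (divr_gt0 D0 Ds0) t1.
by rewrite mulrAC ler_pdivlMr //; nra.
Qed.

Lemma inexact_stationary_of_subgradient (R : realType) (n : nat) (m : R)
    (f : 'rV[R]_n -> R) (eta eps : R) (x v : 'rV[R]_n) :
  v \in inexact_subdiff m f eps x -> enorm v <= eta ->
  inexact_stationary m f eta eps x.
Proof.
rewrite inE => vS vle; apply: le_trans (ereal_inf_lbound _) _.
  by exists v.
by rewrite lee_fin.
Qed.

Section ProximalStep.
Variables (R : realType) (n : nat).
Variables (m rho : R) (f g : 'rV[R]_n -> R) (xk xs : 'rV[R]_n).
Hypothesis g_convex : convexf g.
Hypothesis g_le : forall y, g y <= f y + m / 2 * enorm (y - xk) ^+ 2.
Hypothesis xs_prox : forall y,
  g xs + rho / 2 * enorm (xs - xk) ^+ 2 <= g y + rho / 2 * enorm (y - xk) ^+ 2.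

(* Compare [xs] with the points [(1 - t) xs + t y] of the segment and let [t -> 0]. *)
Lemma prox_subgradient y : g xs + rho * dotv (xk - xs) (y - xs) <= g y.
Proof.
suff : g xs - g y - rho * dotv (xs - xk) (y - xs) <= 0.
  by rewrite -(opprB xk xs) dotvNl; lra.
apply: (@le0_of_le_mul_small _ _ (rho / 2 * enorm (y - xs) ^+ 2)) => t t0 t1.
have conv := g_convex xs y (ltW t0) t1.
have opt := xs_prox ((1 - t) *: xs + t *: y).
have shift : (1 - t) *: xs + t *: y - xk = (xs - xk) + t *: (y - xs).
  by apply/rowP => i; rewrite !mxE; ring.
rewrite shift (sqr_enormD (xs - xk)) sqr_enormZ (dotvC (xs - xk)) dotvZl in opt.
by rewrite dotvC; nra.
Qed.

Lemma prox_model_gap : rho * enorm (xs - xk) ^+ 2 <= f xk - g xs.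
Proof.
have := prox_subgradient xk; have := g_le xk.
by rewrite subrr enorm0 enorm_sub sqr_enorm; nra.
Qed.

Lemma prox_inexact_subgradient eps :
  f xs + m / 2 * enorm (xs - xk) ^+ 2 - g xs <= eps ->
  (m + rho) *: (xk - xs) \in inexact_subdiff m f eps xs.
Proof.
move=> gap; rewrite inE => y.
have sg := prox_subgradient y; have le := g_le y.
have shift : y - xk = (y - xs) - (xk - xs) by apply/rowP => i; rewrite !mxE; ring.
rewrite shift sqr_enormB (dotvC (y - xs)) (enorm_sub xk xs) in le.
by rewrite dotvZl; nra.
Qed.

Lemma prox_step_decrease (beta eta eps : R) :
  0 <= m -> 0 < rho -> 0 < beta -> beta < 1 -> 0 < eta -> 0 < eps ->
  beta * (f xk - g xs) <= f xk - (f xs + m / 2 * enorm (xs - xk) ^+ 2) ->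
  ~ inexact_stationary m f eta eps xs ->
  1 <= (f xk - f xs) * (2 * (m + rho) ^+ 2 / ((m + beta * rho) * eta ^+ 2)
                         + (1 - beta) / (beta * eps)).
Proof.
move=> m0 rho_gt0 b0 b1 eta0 eps0 descent not_stat.
set d := enorm (xs - xk); set G := f xk - g xs.
have gap := prox_model_gap; rewrite -/d -/G in gap descent.
have d2_ge0 : 0 <= d ^+ 2 by rewrite sqr_ge0.
have G_ge0 : 0 <= G by have := mulr_ge0 (ltW rho_gt0) d2_ge0; lra.
have md_ge0 : 0 <= m / 2 * d ^+ 2 by rewrite mulr_ge0 ?divr_ge0.
have decr_G : beta * G <= f xk - f xs by lra.
have mr0 : 0 < m + rho by lra.
have mb0 : 0 < m + beta * rho by rewrite ltr_wpDl // mulr_gt0.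
have c1_ge0 : 0 <= 2 * (m + rho) ^+ 2 / ((m + beta * rho) * eta ^+ 2).
  by rewrite divr_ge0 // ?mulr_ge0 // ?exprn_ge0 // ltW.
have c2_ge0 : 0 <= (1 - beta) / (beta * eps).
  by rewrite divr_ge0 // ?subr_ge0 ?mulr_ge0 // ltW.
have D_ge0 : 0 <= f xk - f xs by have := mulr_ge0 (ltW b0) G_ge0; lra.
rewrite mulrDr.
have [eta_lt|eta_ge] := ltP eta ((m + rho) * d).
  suff : 1 <= (f xk - f xs) * (2 * (m + rho) ^+ 2 / ((m + beta * rho) * eta ^+ 2)).
    by have := mulr_ge0 D_ge0 c2_ge0; lra.
  rewrite mulrA ler_pdivlMr ?mul1r ?mulr_gt0 ?exprn_gt0 //.
  have eta2_le : eta ^+ 2 <= (m + rho) ^+ 2 * d ^+ 2.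
    by rewrite -exprMn; nra.
  have decr_d : (m + beta * rho) / 2 * d ^+ 2 <= f xk - f xs.
    have := mulr_ge0 (mulr_ge0 (ltW b0) (ltW rho_gt0)) d2_ge0.
    by have := ler_wpM2l (ltW b0) gap; lra.
  have := ler_wpM2l (ltW mb0) eta2_le.
  by have := ler_wpM2r (sqr_ge0 (m + rho)) decr_d; lra.
have [eps_lt|eps_ge] := ltP eps ((1 - beta) * G).
  suff : 1 <= (f xk - f xs) * ((1 - beta) / (beta * eps)).
    by have := mulr_ge0 D_ge0 c1_ge0; lra.
  rewrite mulrA ler_pdivlMr ?mul1r ?mulr_gt0 //.
  have b1' : 0 <= 1 - beta by rewrite subr_ge0 ltW.
  have := ler_wpM2l b1' decr_G.
  have : beta * eps < beta * ((1 - beta) * G) by rewrite ltr_pM2l.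
  by lra.
exfalso; apply: not_stat.
apply: (inexact_stationary_of_subgradient (prox_inexact_subgradient _)).
  by move: descent eps_ge; rewrite /G -/d; lra.
by rewrite enormZ ?(ltW mr0) // enorm_sub.
Qed.

End ProximalStep.

Lemma telescope_lower_bound (R : realFieldType) (a : nat -> R) (c : R) (N : nat) :
  (forall k, (k < N)%N -> 1 <= (a k - a k.+1) * c) -> N%:R <= (a 0%N - a N) * c.
Proof.
elim: N => [|N IH] step; first by rewrite subrr mul0r.
have IHN := IH (fun k kN => step k (ltnW kN)).
have := step N (ltnSn N).
by rewrite mulrS; nra.
Qed.

Theorem mainTheorem6 (R : realType) (n : nat) (m : R) (f : 'rV[R]_n -> R)
  (fstar beta rho : R) (x : nat -> 'rV[R]_n) (ftil : nat -> 'rV[R]_n -> R)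
  (eta eps : R) (T : nat) :
  0 <= m ->
  weakly_convex m f ->
  (forall y, fstar <= f y) ->
  (forall e : R, 0 < e -> exists y, f y < fstar + e) ->
  0 < beta -> beta < 1 -> 0 < rho ->
  (forall k : nat, (1 <= k)%N ->
     [/\ convexf (ftil k),
         (forall y, ftil k y <= f y + m / 2 * enorm (y - x k) ^+ 2),
         (forall y, ftil k (x k.+1) + rho / 2 * enorm (x k.+1 - x k) ^+ 2
                    <= ftil k y + rho / 2 * enorm (y - x k) ^+ 2) &
         f (x k) - (f (x k.+1) + m / 2 * enorm (x k.+1 - x k) ^+ 2)
           >= beta * (f (x k) - ftil k (x k.+1))]) ->
  0 < eta -> 0 < eps ->
  T%:R >= 2 * (m + rho) ^+ 2 * (f (x 1%N) - fstar) / (m + beta * rho) / eta ^+ 2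
          + (1 - beta) * (f (x 1%N) - fstar) / beta / eps + 1 ->
  exists k : nat, [/\ (2 <= k)%N, (k <= T.+1)%N &
                      inexact_stationary m f eta eps (x k)].
Proof.
move=> m0 _ fstar_le _ b0 b1 rho0 step eta0 eps0 T_ge.
apply: contrapT => no_stat.
set c := 2 * (m + rho) ^+ 2 / ((m + beta * rho) * eta ^+ 2) + (1 - beta) / (beta * eps).
have decrease k : (k < T)%N -> 1 <= (f (x k.+1) - f (x k.+2)) * c.
  move=> kT; have [g_convex g_le xs_prox descent] := step k.+1 isT.
  apply: (prox_step_decrease g_convex g_le xs_prox) => // stat.
  by apply: no_stat; exists k.+2; split.
have sum_bound := telescope_lower_bound decrease.
have mr0 : 0 < m + rho by rewrite ltr_wpDl.
have mb0 : 0 < m + beta * rho by rewrite ltr_wpDl // mulr_gt0.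
have c_ge0 : 0 <= c.
  apply: addr_ge0; first by rewrite divr_ge0 ?mulr_ge0 ?ltW.
  by rewrite divr_ge0 ?mulr_ge0 ?subr_ge0 ?ltW.
have gap_le : (f (x 1%N) - f (x T.+1)) * c <= (f (x 1%N) - fstar) * c.
  by rewrite ler_wpM2r // lerD2l lerN2.
have bound_eq : 2 * (m + rho) ^+ 2 * (f (x 1%N) - fstar) / (m + beta * rho) / eta ^+ 2
    + (1 - beta) * (f (x 1%N) - fstar) / beta / eps = (f (x 1%N) - fstar) * c.
  by rewrite /c; field; rewrite !gt_eqF.
move: T_ge (le_trans sum_bound gap_le); rewrite bound_eq.
by clear; set a := _ * c; lra.
Qed.
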